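(* Let $T\subseteq 2^{<\omega}$ be a tree with $\lambda([T])>0$ and let $\varepsilon>0$. Call $s\in T\cap 2^k$ fat if $\lambda([T]\cap[s])\ge(1-\varepsilon)/2^k$. Then there is $k^*<\omega$ such that for all $k\ge k^*$, the number of fat nodes $s\in T\cap 2^k$ is at least $|T\cap 2^k|\cdot(1-\varepsilon)$.
   Context: A tree is a subset of $2^{<\omega}$ closed under initial segments; $[T]$ is its set of branches in $2^\omega$, $[s]$ is the set of $x\in 2^\omega$ extending $s$, and $\lambda$ is the standard product (Lebesgue) measure on $2^\omega$. *)

From HB Require Import structures.
From mathcomp Require Import all_boot all_order all_algebra.
From mathcomp Require Import all_classical all_reals all_analysis.
Set Implicit Arguments. Unset Strict Implicit. Unset Printing Implicit Defensive.
Import Order.TTheory GRing.Theory Num.Theory.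

(* Cantor space 2^omega as functions nat -> bool; finite binary strings
   (elements of 2^{<omega}) as seq bool, 2^k = strings of size k. *)

Local Open Scope classical_set_scope.
Local Open Scope ring_scope.

Definition cyl (s : seq bool) : set (nat -> bool) :=
  [set x | forall i, (i < size s)%N -> x i = nth false s i].

Definition cylinders : set (set (nat -> bool)) := [set A | exists s, A = cyl s].

(* 2^omega with the sigma-algebra generated by the cylinders (= Borel sets) *)
Definition cantor_mspace := g_sigma_algebraType cylinders.

Definition restr (x : nat -> bool) (n : nat) : seq bool := [seq x i | i <- iota 0 n].

Definition is_tree (T : pred (seq bool)) : Prop :=
  forall s n, T s -> T (take n s).

Definition body (T : pred (seq bool)) : set cantor_mspace :=
  [set x | forall n, T (restr x n)].

(* lambda = the standard product (coin-tossing) measure on 2^omega, i.e. a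
   measure on the cylinder sigma-algebra with lambda([s]) = 2^{-|s|}
   (such a measure is unique). *)
Definition is_standard_measure {R : realType}
  (mu : {measure set cantor_mspace -> \bar R}) : Prop :=
  forall s : seq bool, mu (cyl s) = ((2%:R ^- size s : R)%:E)%E.

Definition level_count (T : pred (seq bool)) (k : nat) : nat :=
  #|[set t : k.-tuple bool | T (tval t)]|.

From HB Require Import structures.
From mathcomp Require Import all_boot all_order all_algebra.
From mathcomp Require Import all_classical all_reals all_analysis.
From mathcomp Require Import lra.
Import Order.TTheory GRing.Theory Num.Theory.
Import numFieldNormedType.Exports.
Local Open Scope classical_set_scope.
Local Open Scope ring_scope.

(* The cylinders of the nodes of level k cover [T] and their union has measure
   |T ∩ 2^k| / 2^k; these unions decrease to [T], so the densities |T ∩ 2^k| / 2^k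
   converge to m = λ([T]) > 0, and eventually |T ∩ 2^k| / 2^k < m / (1 - ε²).
   Splitting m over the level-k nodes, a fat node contributes at most 2^-k and
   any other node less than (1 - ε) 2^-k, so m <= ((1 - ε) |T ∩ 2^k| + ε F) 2^-k
   where F counts the fat nodes. Comparing the two bounds gives
   F > (1 - ε) |T ∩ 2^k|. *)

Lemma size_restr x n : size (restr x n) = n.
Proof. by rewrite size_map size_iota. Qed.

Lemma take_restr x n m : (m <= n)%N -> take m (restr x n) = restr x m.
Proof.
move=> le_mn; rewrite /restr -map_take; congr map.
by rewrite -{1}(subnKC le_mn) iotaD take_size_cat // size_iota.
Qed.

Lemma cyl_restr (x : nat -> bool) (s : seq bool) : cyl s x <-> restr x (size s) = s.
Proof.
split=> [xs|<- i]; last first.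
  by rewrite size_restr => lt_is; rewrite (nth_map 0%N) ?size_iota // nth_iota.
apply: (@eq_from_nth _ false) => [|i]; first by rewrite size_restr.
by rewrite size_restr => lt_is; rewrite (nth_map 0%N) ?size_iota // nth_iota // xs.
Qed.

Lemma cyl_tuple k (t : k.-tuple bool) x : cyl t x <-> restr x k = t.
Proof. by rewrite -{2}(size_tuple t); exact: cyl_restr. Qed.

Definition restr_tuple x k : k.-tuple bool :=
  @Tuple k bool (restr x k) (introT eqP (size_restr x k)).

Lemma cyl_restr_tuple x k : cyl (restr_tuple x k) x.
Proof. exact/cyl_tuple. Qed.

Lemma cyl_tuple_disjoint k (t t' : k.-tuple bool) : t != t' -> cyl t `&` cyl t' = set0.
Proof.
move=> /eqP neq_tt'; apply/seteqP; split=> // x [/cyl_tuple xt /cyl_tuple xt'].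
by apply: neq_tt'; apply: val_inj; rewrite /= -xt -xt'.
Qed.

Lemma measurable_cyl s : measurable (cyl s : set cantor_mspace).
Proof. by apply: sub_sigma_algebra; exists s. Qed.

Section Measure.
Variables (R : realType) (mu : {measure set cantor_mspace -> \bar R}).

Lemma measure_big_setU_subcyl k (G : k.-tuple bool -> set cantor_mspace)
    (r : seq (k.-tuple bool)) :
  uniq r -> (forall t, measurable (G t)) -> (forall t, G t `<=` cyl t) ->
  mu (\big[setU/set0]_(t <- r) G t) = (\sum_(t <- r) mu (G t))%E.
Proof.
move=> + mG sG; elim: r => [|a r IH] /=; first by rewrite !big_nil measure0.
move=> /andP[ar ur]; have mGr : measurable (\big[setU/set0]_(t <- r) G t).
  by apply: bigsetU_measurable => t _; exact: mG.
rewrite !big_cons measureU //; first by congr (_ + _)%E; exact: IH.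
apply/seteqP; split=> // x [Gax]; rewrite -bigcup_seq => -[b /= br Gbx].
have : cyl a `&` cyl b = set0 by apply: cyl_tuple_disjoint; apply: contraNneq ar => ->.
by move/seteqP => [/(_ x) + _]; apply; split; apply: sG.
Qed.

Hypothesis mu_std : is_standard_measure mu.

Lemma measure_cyl_tuple k (t : k.-tuple bool) : mu (cyl t) = (2%:R ^- k)%:E.
Proof. by rewrite mu_std size_tuple. Qed.

Variable T : pred (seq bool).

Definition level_set k : set (k.-tuple bool) := [set t | T (tval t)].

Lemma mem_level_set k (t : k.-tuple bool) : (t \in level_set k) = T t.
Proof. by apply/idP/idP => [/set_mem | /mem_set]. Qed.

Definition level_cover k : set cantor_mspace := [set x | T (restr x k)].

Lemma level_coverE k : level_cover k = \big[setU/set0]_(t <- enum (level_set k)) cyl t.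
Proof.
rewrite -bigcup_seq; apply/seteqP; split=> x /=.
  move=> Tx; exists (restr_tuple x k); last exact: cyl_restr_tuple.
  by rewrite /= mem_enum mem_level_set.
by move=> [t]; rewrite /= mem_enum mem_level_set => Tt /cyl_tuple; rewrite /level_cover /= => ->.
Qed.

Lemma measurable_level_cover k : measurable (level_cover k).
Proof. by rewrite level_coverE; apply: bigsetU_measurable => t _; exact: measurable_cyl. Qed.

Lemma measure_level_cover k :
  mu (level_cover k) = ((level_count T k)%:R / 2%:R ^+ k)%:E.
Proof.
rewrite level_coverE measure_big_setU_subcyl ?enum_uniq //; [|exact: measurable_cyl|by move=> t].
under eq_bigr => t _ do rewrite measure_cyl_tuple.
by rewrite sumEFin big_enum /= sumr_const mulr_natl.
Qed.

Lemma bodyE : body T = \bigcap_n level_cover n.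
Proof. by apply/seteqP; split=> x /= Tx n; [move=> _|]; apply: Tx. Qed.

Lemma body_sub_level_cover k : body T `<=` level_cover k.
Proof. by move=> x Tx; exact: Tx. Qed.

Lemma measurable_body : measurable (body T).
Proof. by rewrite bodyE; apply: bigcap_measurableType => n _; exact: measurable_level_cover. Qed.

Lemma measure_body_fin_num : mu (body T) \is a fin_num.
Proof.
rewrite ge0_fin_numE ?measure_ge0 //; apply: (@le_lt_trans _ _ (mu (level_cover 0))).
  apply: le_measure; rewrite ?inE; [exact: measurable_body | exact: measurable_level_cover |].
  exact: body_sub_level_cover.
by rewrite measure_level_cover ltry.
Qed.

Lemma measure_body_bigsetU k :
  mu (body T) = (\sum_(t <- enum (level_set k)) mu (body T `&` cyl t))%E.
Proof.
have bodyE_level : body T = \big[setU/set0]_(t <- enum (level_set k)) (body T `&` cyl t).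
  rewrite -bigcup_seq; apply/seteqP; split=> x; last by move=> [t _ []].
  move=> Tx; exists (restr_tuple x k); last by split; [|exact: cyl_restr_tuple].
  by rewrite /= mem_enum mem_level_set; exact: Tx.
rewrite {1}bodyE_level measure_big_setU_subcyl ?enum_uniq // => t.
by apply: measurableI; [exact: measurable_body | exact: measurable_cyl].
Qed.

Variable eps : R.

Definition fat {k} (t : k.-tuple bool) : bool :=
  `[< (((1 - eps) / 2%:R ^+ k)%:E <= mu (body T `&` cyl t))%E >].

Definition fat_set k : {set k.-tuple bool} := [set t : k.-tuple bool | T (tval t) & fat t].

Lemma measure_body_cyl_le k (t : k.-tuple bool) :
  (mu (body T `&` cyl t) <=
    ((1 - eps) / 2%:R ^+ k + (if fat t then eps / 2%:R ^+ k else 0))%:E)%E.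
Proof.
case: ifPn => [_ | /asboolPn /negP]; last by rewrite addr0 -ltNge => /ltW.
rewrite -mulrDl subrK div1r -(measure_cyl_tuple _ t).
apply: le_measure; rewrite ?inE; last exact: subIsetr; last exact: measurable_cyl.
by apply: measurableI; [exact: measurable_body | exact: measurable_cyl].
Qed.

Lemma measure_body_le_fat k :
  (mu (body T) <= ((level_count T k)%:R * ((1 - eps) / 2%:R ^+ k) +
                   #|fat_set k|%:R * (eps / 2%:R ^+ k))%:E)%E.
Proof.
rewrite (measure_body_bigsetU k); apply: le_trans.
  by apply: lee_sum => t _; exact: measure_body_cyl_le.
have fat_card : #|[pred t | (t \in level_set k) && fat t]| = #|fat_set k|.
  by apply: eq_card => t; rewrite !inE mem_level_set.
rewrite sumEFin lee_fin big_split /= -big_mkcondr big_enum big_enum_cond /= !sumr_const.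
by rewrite !mulr_natl -fat_card.
Qed.

Hypothesis T_tree : is_tree T.

Lemma level_density_cvg :
  (fun k => (level_count T k)%:R / 2%:R ^+ k) @ \oo --> fine (mu (body T)).
Proof.
have cvg_cover : (fun k => mu (level_cover k)) @ \oo --> mu (body T).
  rewrite bodyE; apply: nonincreasing_cvg_mu => //.
  - by rewrite measure_level_cover ltry.
  - by move=> n; exact: measurable_level_cover.
  - by rewrite -bodyE; exact: measurable_body.
  move=> n p le_np; apply/subsetPset => x; rewrite /level_cover /= => Tx.
  by have := T_tree _ n Tx; rewrite take_restr.
move: cvg_cover; rewrite -(fineK measure_body_fin_num).
under eq_fun => k do rewrite measure_level_cover.
by move/fine_cvgP => [].
Qed.

End Measure.

Lemma fat_count_ge {K : realFieldType} {S F c e m : K} :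
  0 < c -> 0 < e -> e < 1 -> S * c < m / (1 - e ^+ 2) ->
  m <= S * ((1 - e) * c) + F * (e * c) -> S * (1 - e) <= F.
Proof.
move=> c_gt0 e_gt0 e_lt1 density_lt le_m.
have e2_lt1 : 0 < 1 - e ^+ 2 by nra.
have ec_gt0 : 0 < e * c by rewrite mulr_gt0.
rewrite ltr_pdivlMr // in density_lt.
rewrite ltW // -(ltr_pM2r ec_gt0).
have := lt_le_trans density_lt le_m; lra.
Qed.

Theorem lemma12p2 (R : realType) (mu : {measure set cantor_mspace -> \bar R})
  (T : pred (seq bool)) (eps : R) :
  is_standard_measure mu ->
  is_tree T ->
  (0 < mu (body T))%E ->
  0 < eps ->
  exists kstar : nat, forall k : nat, (kstar <= k)%N ->
    (level_count T k)%:R * (1 - eps) <=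
    (#|[set t : k.-tuple bool | T (tval t) &
         `[< (((1 - eps) / 2%:R ^+ k)%:E <= mu (body T `&` cyl (tval t)))%E >] ]|)%:R.
Proof.
move=> mu_std T_tree body_gt0 eps_gt0.
have [eps_ge1 | eps_lt1] := leP 1 eps.
  by exists 0%N => k _; rewrite (le_trans _ (ler0n _ _)) // mulr_ge0_le0 // subr_le0.
have body_fin := measure_body_fin_num _ _ mu_std T.
set m := fine (mu (body T)).
have m_gt0 : 0 < m by rewrite -lte_fin fineK.
have [N _ density_lt] : \forall k \near \oo,
    (level_count T k)%:R / 2%:R ^+ k < m / (1 - eps ^+ 2).
  have m_lt : m < m / (1 - eps ^+ 2).
    rewrite ltr_pdivlMr; last by nra.
    by have := mulr_gt0 m_gt0 (exprn_gt0 2 eps_gt0); lra.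
  by apply: cvgr_lt m_lt; exact: level_density_cvg.
exists N => k /density_lt density_k.
apply: (fat_count_ge _ eps_gt0 eps_lt1 density_k); first by rewrite invr_gt0 exprn_gt0.
by rewrite -lee_fin fineK //; exact: measure_body_le_fat.
Qed.
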